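(* Let $k\ge2$ be an integer and $p$ an odd prime. Let $$F(t)={}_{k}F_{k-1}\left(\tfrac12,\ldots,\tfrac12;1,\ldots,1\,\middle|\,t\right)=\sum_{n\ge0}\left(\frac{(\frac12)_n}{n!}\right)^{k}t^n,$$ with $k$ upper parameters equal to $\frac12$ and $k-1$ lower parameters equal to $1$. Then for all integers $s\ge1$, $$\frac{F(t)}{F(t^p)}\equiv \frac{F_{p^s}(t)}{F_{p^{s-1}}(t^p)}\pmod{p^s},$$ as power series in $\mathbb{Z}_p[[t]]$ (coefficientwise).
   Context: $(a)_n=a(a+1)\cdots(a+n-1)$ denotes the Pochhammer symbol. For a power series $G(t)$ and an integer $m\ge1$, $G_m(t)$ denotes its truncation: all terms of degree $\ge m$ are deleted; $G_m(t^p)$ denotes this truncation with $t$ replaced by $t^p$. For $k=2$ the series is $F(\frac12,\frac12,1\,|\,t)$. *)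

From mathcomp Require Import all_boot all_order all_algebra.
Set Implicit Arguments. Unset Strict Implicit. Unset Printing Implicit Defensive.
Import Order.TTheory GRing.Theory Num.Theory.
Local Open Scope ring_scope.

(* formal power series with rational coefficients: n |-> coefficient of t^n *)
Definition pseries := nat -> rat.

Definition pochhammer (a : rat) (n : nat) : rat := \prod_(i < n) (a + i%:R).

Definition Fser (k : nat) : pseries :=
  fun n => (pochhammer (1 / 2) n / (n `!)%:R) ^+ k.

Definition ps_trunc (m : nat) (f : pseries) : pseries :=
  fun n => if (n < m)%N then f n else 0.

(* substitution t |-> t^p *)
Definition subst_pow (p : nat) (f : pseries) : pseries :=
  fun n => if (p %| n)%N then f (n %/ p)%N else 0.

Definition ps_mul (f g : pseries) : pseries :=
  fun n => \sum_(i < n.+1) f i * g (n - i)%N.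

(* coefficients 0..n of the multiplicative inverse (f 0 assumed nonzero) *)
Fixpoint pinv_aux (f : pseries) (n : nat) : seq rat :=
  match n with
  | 0 => [:: (f 0%N)^-1]
  | m.+1 => let s := pinv_aux f m in
            rcons s (- (f 0%N)^-1 *
                     \sum_(1 <= i < m.+2) f i * nth 0 s (m.+1 - i)%N)
  end.

Definition ps_inv (f : pseries) : pseries := fun n => nth 0 (pinv_aux f n) n.

Definition ps_div (f g : pseries) : pseries := ps_mul f (ps_inv g).

(* x lies in p^s Z_(p), i.e. x = p^s a / b with a, b integers, p not dividing b *)
Definition in_pZp (p s : nat) (x : rat) : Prop :=
  exists (a b : int), ~~ (p%:Z %| b)%Z /\ x = (p ^ s)%:R * a%:~R / b%:~R.

Definition pcong (p s : nat) (f g : pseries) : Prop :=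
  forall n, in_pZp p s (f n - g n).

(* Write a(n) = (1/2)_n / n! = prod_(l < n) (2l+1)/(2l+2), so that F has coefficients
   A(n) = a(n)^k.  Splitting off the last p-adic digit, A(b + p u) = A(u) G_b(u) for b < p,
   where G_b(u) collects the factors 2l+1, 2l+2 prime to p and, when 2b+1 > p, the factor
   p(2u+1) of the numerator.  Each G_b satisfies Dwork's congruences
   G(u + m p^j) = G(u) mod p^(j+1), because products of the p-adic units over a full
   period of length p^j are 1 mod p^j.
   For such A the argument is Dwork's: clearing denominators, the claim becomes
   F(t) F_(p^(s-1))(t^p) = F_(p^s)(t) F(t^p) mod p^s, and the coefficients of the difference
   are antisymmetrised sums Phi_t over pairs x + y = M with x in one block of length p^t
   (t = s-1).  Splitting off the last digits of x and y writes Phi_(t+1) as a combination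
   of sums Phi_t whose leading part cancels by antisymmetry and whose other parts carry an
   extra factor p; hence Phi_t = 0 mod p^(t+1) by induction on t. *)

From mathcomp Require Import all_boot all_order all_algebra.
From mathcomp Require Import zify ring lra.
Set Implicit Arguments. Unset Strict Implicit. Unset Printing Implicit Defensive.
Import Order.TTheory GRing.Theory Num.Theory.

Local Open Scope ring_scope.

Lemma size_pinv_aux f n : size (pinv_aux f n) = n.+1.
Proof. by elim: n => [|n IHn] //=; rewrite size_rcons IHn. Qed.

Lemma nth_pinv_aux f n m : (m <= n)%N -> nth 0 (pinv_aux f n) m = ps_inv f m.
Proof.
elim: n => [|n IHn]; first by rewrite leqn0 => /eqP ->.
rewrite leq_eqVlt => /orP [/eqP -> //|mn].
by rewrite /= nth_rcons size_pinv_aux mn IHn.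
Qed.

Lemma ps_invS f m : ps_inv f m.+1 =
  - (f 0%N)^-1 * \sum_(1 <= i < m.+2) f i * ps_inv f (m.+1 - i)%N.
Proof.
rewrite {1}/ps_inv /= nth_rcons size_pinv_aux ltnn eqxx; congr (_ * _).
apply: eq_big_nat => i /andP [i_gt0 _]; rewrite nth_pinv_aux //.
by rewrite leq_subLR -addn1 addnC leq_add2r.
Qed.

Lemma ps_mul_inv f n : f 0%N = 1 -> ps_mul f (ps_inv f) n = (n == 0%N)%:R.
Proof.
move=> f0; case: n => [|n]; first by rewrite /ps_mul big_ord1 /ps_inv /= f0 invr1 mulr1.
rewrite /ps_mul big_ord_recl /= subn0 ps_invS f0 invr1 mulN1r mul1r.
by rewrite big_add1 /= big_mkord addNr.
Qed.

Lemma take_polyM (R : nzRingType) n (P Q : {poly R}) :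
  take_poly n (P * Q) = take_poly n (take_poly n P * take_poly n Q).
Proof.
set P0 := take_poly n P; set P1 := drop_poly n P.
set Q0 := take_poly n Q; set Q1 := drop_poly n Q.
have -> : P * Q = P0 * Q0 + (P0 * Q1 + P1 * Q0 + P1 * Q1 * 'X^n) * 'X^n.
  rewrite -{1}(poly_take_drop n P) -{1}(poly_take_drop n Q) -/P0 -/P1 -/Q0 -/Q1.
  rewrite !mulrDl !mulrDr !mulrA -!addrA; congr (_ + _).
  by rewrite -!mulrA -!(commr_polyXn Q0) -(commr_polyXn (Q1 * 'X^n)) !mulrA addrC.
by rewrite linearD /= take_polyMXn_0 addr0.
Qed.

Lemma take_polyMr_id (R : nzRingType) n (P Q : {poly R}) :
  take_poly n Q = 1 -> take_poly n (P * Q) = take_poly n P.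
Proof. by rewrite take_polyM => ->; rewrite mulr1 take_poly_id // size_take_poly. Qed.

Definition ps_poly n (f : pseries) : {poly rat} := \poly_(i < n) f i.

Lemma coef_ps_polyM n f g i :
  (i < n)%N -> (ps_poly n f * ps_poly n g)`_i = ps_mul f g i.
Proof.
move=> ilt; rewrite coefM; apply: eq_bigr => -[j /= ji] _.
by rewrite !coef_poly (leq_ltn_trans (leq_subr j i) ilt) (leq_ltn_trans _ ilt).
Qed.

Lemma take_ps_poly_inv n f : f 0%N = 1 -> (0 < n)%N ->
  take_poly n (ps_poly n f * ps_poly n (ps_inv f)) = 1.
Proof.
move=> f0 n_gt0; apply/polyP => i; rewrite coef_take_poly coef1.
case: ltnP => [ilt|nlei]; first by rewrite coef_ps_polyM // ps_mul_inv.
by case: eqP => // i0; move: nlei; rewrite i0 leqn0 => /eqP n0; rewrite n0 in n_gt0.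
Qed.

Lemma sum_nat_widen_vanish (F : nat -> rat) B B' :
  (B <= B')%N -> (forall x, (B <= x)%N -> F x = 0) ->
  \sum_(0 <= x < B') F x = \sum_(0 <= x < B) F x.
Proof.
move=> BB' F0; rewrite (big_cat_nat _ (n := B)) //= [X in _ + X]big_nat_cond.
by rewrite [X in _ + X]big1 ?addr0 // => x /andP [/andP [Bx _] _]; apply: F0.
Qed.

Lemma sum_antisym (F : nat -> nat -> rat) n :
  (forall a b, F a b = - F b a) -> \sum_(0 <= a < n) \sum_(0 <= b < n) F a b = 0.
Proof.
move=> F_anti; set T := LHS; suff : T = - T by lra.
rewrite {1}/T exchange_big_nat -sumrN; apply: eq_bigr => a _.
by rewrite -sumrN; apply: eq_bigr => b _; apply: F_anti.
Qed.

Lemma sum_nat_indicator (F : nat -> rat) B c : (c < B)%N ->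
  \sum_(0 <= y < B) (y == c)%:R * F y = F c.
Proof.
move=> cB; rewrite (eq_bigr (fun y => if y == c then F y else 0)) => [|y _]; last first.
  by case: eqP; rewrite ?mul1r ?mul0r.
by rewrite -big_mkcond big_nat1_eq cB.
Qed.

(** * p-adic integrality *)

Section Padic.
Variable p : nat.
Hypothesis p_prime : prime p.

Lemma pnatr_neq0 : p%:R != 0 :> rat.
Proof. by rewrite pnatr_eq0 -lt0n prime_gt0. Qed.

Lemma not_dvdz1 : ~~ (p%:Z %| 1)%Z.
Proof. by rewrite dvdzE /= dvdn1 neq_ltn prime_gt1 ?orbT. Qed.

Lemma not_dvdzM (b d : int) :
  ~~ (p%:Z %| b)%Z -> ~~ (p%:Z %| d)%Z -> ~~ (p%:Z %| b * d)%Z.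
Proof. by rewrite !dvdzE abszM Euclid_dvdM // => /negbTE -> /negbTE ->. Qed.

Lemma not_dvdz_intr_neq0 (b : int) : ~~ (p%:Z %| b)%Z -> b%:~R != 0 :> rat.
Proof. by apply: contra; rewrite intr_eq0 => /eqP ->; rewrite dvdz0. Qed.

Lemma in_pZp_pexp e (a : int) : in_pZp p e ((p ^ e)%:R * a%:~R).
Proof. by exists a, 1; rewrite divr1 not_dvdz1. Qed.

Lemma in_pZp0 e : in_pZp p e 0.
Proof. by have := in_pZp_pexp e 0; rewrite mulr0. Qed.

Lemma in_pZp_expn e : in_pZp p e (p ^ e)%:R.
Proof. by have := in_pZp_pexp e 1; rewrite mulr1. Qed.

Lemma in_pZp_int (a : int) : in_pZp p 0 a%:~R.
Proof. by have := in_pZp_pexp 0 a; rewrite mul1r. Qed.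

Lemma in_pZp_nat (n : nat) : in_pZp p 0 n%:R.
Proof. exact: in_pZp_int n. Qed.

Lemma in_pZp_natV (n : nat) : ~~ (p %| n)%N -> in_pZp p 0 n%:R^-1.
Proof. by move=> pn; exists 1, n; rewrite dvdzE expn0 !mul1r. Qed.

Lemma in_pZpD e x y : in_pZp p e x -> in_pZp p e y -> in_pZp p e (x + y).
Proof.
move=> [a [b [pb ->]]] [c [d [pd ->]]].
exists (a * d + c * b), (b * d); split; first exact: not_dvdzM.
have := not_dvdz_intr_neq0 pb; have := not_dvdz_intr_neq0 pd.
by rewrite rmorphD !rmorphM /= => d0 b0; field; apply/andP.
Qed.

Lemma in_pZpN e x : in_pZp p e x -> in_pZp p e (- x).
Proof.
by move=> [a [b [pb ->]]]; exists (- a), b; rewrite rmorphN /= mulrN mulNr.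
Qed.

Lemma in_pZpB e x y : in_pZp p e x -> in_pZp p e y -> in_pZp p e (x - y).
Proof. by move=> px py; apply/in_pZpD/in_pZpN. Qed.

Lemma in_pZp_trans e (x y z : rat) :
  in_pZp p e (x - y) -> in_pZp p e (y - z) -> in_pZp p e (x - z).
Proof. by move=> pxy pyz; rewrite (_ : x - z = (x - y) + (y - z)); [apply: in_pZpD | ring]. Qed.

Lemma in_pZpM e f x y : in_pZp p e x -> in_pZp p f y -> in_pZp p (e + f) (x * y).
Proof.
move=> [a [b [pb ->]]] [c [d [pd ->]]].
exists (a * c), (b * d); split; first exact: not_dvdzM.
have := not_dvdz_intr_neq0 pb; have := not_dvdz_intr_neq0 pd.
by rewrite !rmorphM /= expnD natrM => d0 b0; field; apply/andP.
Qed.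

Lemma in_pZpMl e x y : in_pZp p 0 x -> in_pZp p e y -> in_pZp p e (x * y).
Proof. exact: in_pZpM. Qed.

Lemma in_pZpMr e x y : in_pZp p e x -> in_pZp p 0 y -> in_pZp p e (x * y).
Proof. by move=> px py; rewrite -[e]addn0; apply: in_pZpM. Qed.

Lemma in_pZp_mulp e x : in_pZp p e x -> in_pZp p e.+1 (p%:R * x).
Proof. by move=> px; have := in_pZpM (in_pZp_expn 1) px; rewrite expn1. Qed.

Lemma in_pZpW e f x : (f <= e)%N -> in_pZp p e x -> in_pZp p f x.
Proof.
move=> fe [a [b [pb ->]]]; exists ((p ^ (e - f))%:R * a), b; split => //.
by rewrite rmorphM /= -(subnK fe) expnD natrM mulrz_nat addnK !mulrA [_ * (p ^ f)%:R]mulrC.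
Qed.

Lemma in_pZp_divp e x : in_pZp p e.+1 x -> in_pZp p e (x / p%:R).
Proof.
move=> [a [b [pb ->]]]; exists a, b; split => //.
have := not_dvdz_intr_neq0 pb; have := pnatr_neq0.
by rewrite expnS natrM => p0 b0; field; apply/andP.
Qed.

Lemma in_pZp_sum e (I : eqType) (r : seq I) (P : pred I) (F : I -> rat) :
  (forall i, i \in r -> P i -> in_pZp p e (F i)) ->
  in_pZp p e (\sum_(i <- r | P i) F i).
Proof.
move=> pF; rewrite big_seq_cond; elim/big_rec: _ => [|i x /andP [ri Pi] px].
  exact: in_pZp0.
exact: in_pZpD (pF i ri Pi) px.
Qed.

Lemma in_pZp_prod (I : Type) (r : seq I) (P : pred I) (F : I -> rat) :
  (forall i, in_pZp p 0 (F i)) -> in_pZp p 0 (\prod_(i <- r | P i) F i).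
Proof.
move=> pF; elim/big_rec: _ => [|i x _ px]; first exact: in_pZp_nat 1.
exact: in_pZpMl.
Qed.

Lemma in_pZpX x n : in_pZp p 0 x -> in_pZp p 0 (x ^+ n).
Proof. by move=> px; rewrite -(subn0 n) -prodr_const_nat; apply: in_pZp_prod. Qed.

Lemma in_pZp_prodB e (I : Type) (r : seq I) (F G : I -> rat) :
  (forall i, in_pZp p 0 (F i)) -> (forall i, in_pZp p 0 (G i)) ->
  (forall i, in_pZp p e (F i - G i)) ->
  in_pZp p e (\prod_(i <- r) F i - \prod_(i <- r) G i).
Proof.
move=> pF pG pFG; elim: r => [|i r IHr]; first by rewrite !big_nil subrr; apply: in_pZp0.
rewrite !big_cons.
have -> : F i * \prod_(j <- r) F j - G i * \prod_(j <- r) G j =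
  (F i - G i) * \prod_(j <- r) F j + G i * (\prod_(j <- r) F j - \prod_(j <- r) G j).
  by ring.
by apply: in_pZpD; [apply: in_pZpMr => //; apply: in_pZp_prod | apply: in_pZpMl].
Qed.

Lemma in_pZp_ps_inv f : f 0%N = 1 -> (forall i, in_pZp p 0 (f i)) ->
  forall n, in_pZp p 0 (ps_inv f n).
Proof.
move=> f0 pf n; elim: n {-2}n (leqnn n) => [|n IHn] m.
  by rewrite leqn0 => /eqP ->; rewrite /ps_inv /= f0 invr1; exact: in_pZp_nat 1.
rewrite leq_eqVlt => /orP [/eqP ->|]; last exact: IHn.
rewrite ps_invS f0 invr1 mulN1r; apply/in_pZpN/in_pZp_sum => // i.
rewrite mem_index_iota => /andP [i_gt0 _] _; apply: in_pZpMl => //; apply: IHn.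
by rewrite leq_subLR -addn1 addnC leq_add2r.
Qed.

Lemma pcong_div e (X Y Z W : pseries) :
  Y 0%N = 1 -> W 0%N = 1 ->
  (forall i, in_pZp p 0 (Y i)) -> (forall i, in_pZp p 0 (W i)) ->
  (forall n, in_pZp p e (ps_mul X W n - ps_mul Z Y n)) ->
  pcong p e (ps_div X Y) (ps_div Z W).
Proof.
move=> Y0 W0 pY pW pXWZY n.
pose P f := ps_poly n.+1 f.
have Yinv := take_ps_poly_inv Y0 (ltn0Sn n).
have Winv := take_ps_poly_inv W0 (ltn0Sn n).
have -> : ps_div X Y n - ps_div Z W n =
    ((P X * P W - P Z * P Y) * (P (ps_inv Y) * P (ps_inv W)))`_n.
  have -> : (P X * P W - P Z * P Y) * (P (ps_inv Y) * P (ps_inv W)) =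
      (P X * P (ps_inv Y)) * (P W * P (ps_inv W)) -
      (P Z * P (ps_inv W)) * (P Y * P (ps_inv Y)) by ring.
  have coef_take (Q : {poly rat}) : Q`_n = (take_poly n.+1 Q)`_n by rewrite coef_take_poly ltnSn.
  rewrite coef_take linearB /= (take_polyMr_id _ Winv) (take_polyMr_id _ Yinv).
  by rewrite coefB !coef_take_poly ltnSn !coef_ps_polyM.
rewrite coefM; apply: in_pZp_sum => -[j /= jn] _ _; rewrite ltnS in jn.
apply: in_pZpMr; first by rewrite coefB !coef_ps_polyM.
rewrite coef_ps_polyM ?ltnS ?leq_subr //; apply: in_pZp_sum => i _ _.
by apply: in_pZpMl; apply: in_pZp_ps_inv.
Qed.

(** * Dwork sequences and Dwork's congruence *)

Record dwork_seq (f : nat -> rat) : Prop := DworkSeq {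
  dwork_seq_int : forall u, in_pZp p 0 (f u);
  dwork_seq_cong : forall u m j, in_pZp p j.+1 (f (u + m * p ^ j)%N - f u) }.

Lemma dwork_seq_eq f g : f =1 g -> dwork_seq f -> dwork_seq g.
Proof. by move=> fg [f_int f_cong]; split => *; rewrite -!fg. Qed.

Lemma dwork_seq_cst c : in_pZp p 0 c -> dwork_seq (fun _ => c).
Proof. by move=> pc; split => // *; rewrite subrr; apply: in_pZp0. Qed.

Lemma dwork_seqM f g : dwork_seq f -> dwork_seq g -> dwork_seq (fun u => f u * g u).
Proof.
move=> [f_int f_cong] [g_int g_cong]; split => [u|u m j]; first exact: in_pZpMl.
set v := (u + m * p ^ j)%N.
have -> : f v * g v - f u * g u = f v * (g v - g u) + (f v - f u) * g u by ring.
by apply: in_pZpD; [apply: in_pZpMl (g_cong _ _ _) | apply: in_pZpMr (f_cong _ _ _) _].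
Qed.

Lemma dwork_seqX f k : dwork_seq f -> dwork_seq (fun u => f u ^+ k).
Proof.
move=> df; elim: k => [|k IHk].
  apply: (@dwork_seq_eq (fun _ => 1)); first by move=> u; rewrite expr0.
  exact/dwork_seq_cst/(in_pZp_nat 1).
by apply: (dwork_seq_eq _ (dwork_seqM df IHk)) => u; rewrite exprS.
Qed.

Lemma dwork_seq_cong0 f x : dwork_seq f -> in_pZp p 1 (f x - f 0%N).
Proof. by move=> [_ f_cong]; have := f_cong 0%N x 0%N; rewrite expn0 muln1. Qed.

Lemma digit_shift b u m j : (b + p * (u + m * p ^ j) = (b + p * u) + m * p ^ j.+1)%N.
Proof. by rewrite expnS mulnDr addnA mulnCA. Qed.

Lemma dwork_seq_digit f b : dwork_seq f -> dwork_seq (fun u => f (b + p * u)%N).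
Proof.
move=> [f_int f_cong]; split => // u m j.
by rewrite digit_shift; apply: in_pZpW (f_cong _ _ _).
Qed.

Lemma dwork_seq_digit_quot f b :
  dwork_seq f -> dwork_seq (fun u => (f (b + p * u)%N - f b) / p%:R).
Proof.
move=> [f_int f_cong]; split => [u|u m j].
  apply/in_pZp_divp/(@in_pZpW 2) => //.
  by have := f_cong b u 1%N; rewrite expn1 [(u * p)%N]mulnC.
rewrite [X in in_pZp _ _ X](_ : _ = (f (b + p * (u + m * p ^ j))%N - f (b + p * u)%N) / p%:R).
  by apply: in_pZp_divp; rewrite digit_shift; apply: f_cong.
by rewrite -mulrBl opprB addrA subrK.
Qed.

Lemma sum_nat_digits (f : nat -> rat) B :
  \sum_(0 <= x < p * B) f x = \sum_(0 <= a < p) \sum_(0 <= x < B) f (a + p * x)%N.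
Proof.
rewrite mulnC big_nat_mul [RHS]exchange_big_nat; apply: eq_bigr => x _.
rewrite -{1}[(x * p)%N]add0n big_addn mulSn addnK.
by apply: eq_bigr => a _; rewrite [(x * p)%N]mulnC.
Qed.

Lemma sum_nat_dvd (h : nat -> rat) N :
  \sum_(0 <= i < N.+1) (if (p %| i)%N then h i else 0) =
  \sum_(0 <= j < (N %/ p).+1) h (p * j)%N.
Proof.
elim: N => [|N IHN]; first by rewrite div0n !big_nat1 dvdn0 muln0.
rewrite big_nat_recr //= IHN divnS ?prime_gt0 //.
case: (boolP (p %| N.+1)%N) => pN /=; last by rewrite addr0 add0n.
rewrite add1n [RHS]big_nat_recr //=; congr (_ + h _).
by rewrite -{1}(divnK pN) divnS ?prime_gt0 // pN mulnC.
Qed.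

Lemma ps_mul_subst_pow f g N :
  ps_mul f (subst_pow p g) N = \sum_(0 <= j < (N %/ p).+1) f (N - p * j)%N * g j.
Proof.
have /= := sum_nat_dvd (fun i => f (N - i)%N * g (i %/ p)%N) N.
under [X in _ = X -> _]eq_bigr => j _ do rewrite mulKn ?prime_gt0 //.
move=> <-; rewrite /ps_mul -(big_mkord xpredT (fun i => f i * subst_pow p g (N - i)%N)).
rewrite big_nat_rev; apply: eq_big_nat => i /andP [_ iN]; rewrite ltnS in iN.
rewrite add0n subSS subKn // /subst_pow.
by case: ifP; rewrite ?mulr0.
Qed.

Section DworkCongruence.
Variables (A : nat -> rat) (G : nat -> nat -> rat).
Hypothesis A_int : forall x, in_pZp p 0 (A x).
Hypothesis A_digit : forall a u, (a < p)%N -> A (a + p * u)%N = A u * G a u.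
Hypothesis G_dwork : forall a, (a < p)%N -> dwork_seq (G a).

(* The part of the coefficient of t^M in (sum_x A x K x t^x) (sum_y A y L y t^y) with x in
   the m-th block [m p^t, (m+1) p^t); B only has to exceed M. *)
Definition block_conv (B t m M : nat) (K L : nat -> rat) :=
  \sum_(0 <= x < B) \sum_(0 <= y < B)
    ((x + y == M)%N%:R * ((x %/ p ^ t == m)%N%:R * (A x * A y * (K x * L y)))).

Definition block_comm (B t m M : nat) (K L : nat -> rat) := block_conv B t m M L K - block_conv B t m M K L.

Lemma block_comm_antisym B t m M K L : block_comm B t m M K L = - block_comm B t m M L K.
Proof. by rewrite /block_comm opprB. Qed.

Lemma block_conv_linl B t m M c d K K1 K2 L :
  (forall u, K u = c * K1 u + d * K2 u) ->
  block_conv B t m M K L = c * block_conv B t m M K1 L + d * block_conv B t m M K2 L.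
Proof.
move=> defK; rewrite /block_conv !mulr_sumr -big_split; apply: eq_bigr => x _.
by rewrite !mulr_sumr -big_split; apply: eq_bigr => y _ /=; rewrite defK; ring.
Qed.

Lemma block_conv_linr B t m M c d K L L1 L2 :
  (forall u, L u = c * L1 u + d * L2 u) ->
  block_conv B t m M K L = c * block_conv B t m M K L1 + d * block_conv B t m M K L2.
Proof.
move=> defL; rewrite /block_conv !mulr_sumr -big_split; apply: eq_bigr => x _.
by rewrite !mulr_sumr -big_split; apply: eq_bigr => y _ /=; rewrite defL; ring.
Qed.

Lemma block_comm_linl B t m M c d K K1 K2 L :
  (forall u, K u = c * K1 u + d * K2 u) ->
  block_comm B t m M K L = c * block_comm B t m M K1 L + d * block_comm B t m M K2 L.
Proof.
by move=> defK; rewrite /block_comm (block_conv_linl _ _ _ _ _ defK) (block_conv_linr _ _ _ _ _ defK); ring.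
Qed.

Lemma block_comm_linr B t m M c d K L L1 L2 :
  (forall u, L u = c * L1 u + d * L2 u) ->
  block_comm B t m M K L = c * block_comm B t m M K L1 + d * block_comm B t m M K L2.
Proof.
move=> defL; rewrite block_comm_antisym (block_comm_linl _ _ _ _ _ defL).
by rewrite !(block_comm_antisym _ _ _ _ K); ring.
Qed.

Lemma block_conv_widen B B' t m M K L : (M < B)%N -> (B <= B')%N ->
  block_conv B' t m M K L = block_conv B t m M K L.
Proof.
move=> MB BB'; have xyM x y : (B <= x + y)%N -> (x + y == M)%N%:R = 0 :> rat.
  by move=> Bxy; case: eqP => // xyM; move: MB; rewrite -xyM ltnNge Bxy.
rewrite /block_conv (sum_nat_widen_vanish BB') => [|x Bx]; last first.
  by apply: big1 => y _; rewrite xyM ?mul0r // (leq_trans Bx (leq_addr _ _)).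
apply: eq_bigr => x _; rewrite (sum_nat_widen_vanish BB') // => y By.
by rewrite xyM ?mul0r // (leq_trans By (leq_addl _ _)).
Qed.

Lemma block_comm_widen B B' t m M K L : (M < B)%N -> (B <= B')%N ->
  block_comm B' t m M K L = block_comm B t m M K L.
Proof. by move=> MB BB'; rewrite /block_comm !(block_conv_widen _ _ _ _ MB BB'). Qed.

Lemma block_comm_base B m M K L : dwork_seq K -> dwork_seq L ->
  in_pZp p 1 (block_comm B 0 m M K L).
Proof.
move=> dK dL; rewrite /block_comm /block_conv -sumrB; apply: in_pZp_sum => x _ _.
rewrite -sumrB; apply: in_pZp_sum => y _ _; rewrite -!mulrBr.
do 2 (apply: in_pZpMl; first exact: in_pZp_nat).
apply: in_pZpMl; first exact: in_pZpMl.
have -> : L x * K y - K x * L y = L x * (K y - K 0%N) - K x * (L y - L 0%N)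
    + K 0%N * (L x - L 0%N) - L 0%N * (K x - K 0%N) by ring.
have [K_int _] := dK; have [L_int _] := dL.
by apply: in_pZpB; [apply: in_pZpD; [apply: in_pZpB|]|]; apply: in_pZpMl => //;
  apply: dwork_seq_cong0.
Qed.

Lemma divn_digit a x t : (a < p)%N -> ((a + p * x) %/ p ^ t.+1 = x %/ p ^ t)%N.
Proof.
move=> ap; rewrite expnS divnMA; congr (_ %/ _)%N.
by rewrite addnC mulnC divnMDl ?prime_gt0 // divn_small // addn0.
Qed.

Lemma addn_digits_eq a b x y M :
  (a + p * x + (b + p * y) == M)%N =
  [&& a + b <= M, p %| M - (a + b) & x + y == (M - (a + b)) %/ p]%N.
Proof.
rewrite (_ : a + p * x + (b + p * y) = a + b + p * (x + y))%N; last by ring.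
apply/eqP/and3P => [<-|[abM p_dvd /eqP ->]].
  by rewrite leq_addr addKn dvdn_mulr // mulKn ?prime_gt0.
by rewrite mulnC divnK // subnKC.
Qed.

Lemma block_conv_decomp B t m M K L :
  block_conv (p * B) t.+1 m M K L =
  \sum_(0 <= a < p) \sum_(0 <= b < p)
    ((a + b <= M) && (p %| M - (a + b)))%N%:R *
      block_conv B t m ((M - (a + b)) %/ p)%N (fun u => G a u * K (a + p * u)%N)
                                            (fun u => G b u * L (b + p * u)%N).
Proof.
rewrite /block_conv sum_nat_digits; apply: eq_big_nat => a /andP [_ ap].
under eq_bigr => x _ do rewrite sum_nat_digits.
rewrite exchange_big_nat; apply: eq_big_nat => b /andP [_ bp].
rewrite mulr_sumr; apply: eq_bigr => x _; rewrite mulr_sumr; apply: eq_bigr => y _.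
rewrite addn_digits_eq divn_digit // !A_digit //.
set d := ((x %/ _)%N == m)%:R. (* an atom for [ring] *)
by case: (a + b <= M)%N; case: (p %| _)%N; case: (x + y == _)%N; rewrite /=; ring.
Qed.

Lemma block_comm_decomp B t m M K L :
  block_comm (p * B) t.+1 m M K L =
  \sum_(0 <= a < p) \sum_(0 <= b < p)
    ((a + b <= M) && (p %| M - (a + b)))%N%:R *
      block_comm B t m ((M - (a + b)) %/ p)%N (fun u => G b u * K (b + p * u)%N)
                                            (fun u => G a u * L (a + p * u)%N).
Proof.
rewrite /block_comm !block_conv_decomp [X in _ - X]exchange_big_nat -sumrB.
apply: eq_bigr => a _; rewrite -sumrB; apply: eq_bigr => b _.
by rewrite [(b + a)%N]addnC mulrBr.
Qed.

Section InductionStep.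
Variable t : nat.
Hypothesis block_comm_cong_t : forall B m M K L, (M < B)%N -> dwork_seq K -> dwork_seq L ->
  in_pZp p t.+1 (block_comm B t m M K L).

Lemma block_comm_digit_cong B m M a b K L :
  (a < p)%N -> (b < p)%N -> (M < B)%N -> dwork_seq K -> dwork_seq L ->
  in_pZp p t.+2
    (block_comm B t m M (fun u => G b u * K (b + p * u)%N) (fun u => G a u * L (a + p * u)%N)
     - K 0%N * L 0%N * block_comm B t m M (G b) (G a)).
Proof.
move=> ap bp MB dK dL; have p_neq0 := pnatr_neq0.
(* K (b + p u) = K b + p K' u and L (a + p u) = L a + p L' u with K', L' Dwork sequences. *)
pose K' u := G b u * ((K (b + p * u)%N - K b) / p%:R).
pose L' u := G a u * ((L (a + p * u)%N - L a) / p%:R).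
have dK' : dwork_seq K' by apply: dwork_seqM; [exact: G_dwork | exact: dwork_seq_digit_quot].
have dL' : dwork_seq L' by apply: dwork_seqM; [exact: G_dwork | exact: dwork_seq_digit_quot].
have dLa : dwork_seq (fun u => G a u * L (a + p * u)%N).
  by apply: dwork_seqM; [exact: G_dwork | exact: dwork_seq_digit].
rewrite (block_comm_linl _ _ _ _ _ (c := K b) (d := p%:R) (K1 := G b) (K2 := K')); last first.
  by move=> u; rewrite /K'; field.
rewrite (block_comm_linr _ _ _ _ _ (c := L a) (d := p%:R) (L1 := G a) (L2 := L')); last first.
  by move=> u; rewrite /L'; field.
set P0 := block_comm B t m M (G b) (G a).
have -> : K b * (L a * P0 + p%:R * block_comm B t m M (G b) L') +
    p%:R * block_comm B t m M K' (fun u => G a u * L (a + p * u)%N) - K 0%N * L 0%N * P0 =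
  (K b * (L a - L 0%N) + (K b - K 0%N) * L 0%N) * P0 +
    p%:R * (K b * block_comm B t m M (G b) L') +
    p%:R * block_comm B t m M K' (fun u => G a u * L (a + p * u)%N) by ring.
have [K_int _] := dK; have [L_int _] := dL.
apply: in_pZpD; [apply: in_pZpD|]; last by apply/in_pZp_mulp/block_comm_cong_t.
  apply: (@in_pZpM 1); last by apply: block_comm_cong_t => //; apply: G_dwork.
  by apply: in_pZpD; [apply: in_pZpMl | apply: in_pZpMr]; rewrite //; apply: dwork_seq_cong0.
apply/in_pZp_mulp/in_pZpMl => //; apply: block_comm_cong_t => //; exact: G_dwork.
Qed.

Lemma block_comm_cong_succ B m M K L : (M < B)%N -> dwork_seq K -> dwork_seq L ->
  in_pZp p t.+2 (block_comm B t.+1 m M K L).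
Proof.
move=> MB dK dL; have BpB : (B <= p * B)%N by rewrite leq_pmull ?prime_gt0.
rewrite -(block_comm_widen _ _ _ _ MB BpB) block_comm_decomp.
set c := fun a b => ((a + b <= M) && (p %| M - (a + b)))%N%:R : rat.
set M' := fun a b => ((M - (a + b)) %/ p)%N.
have M'B a b : (M' a b < B)%N.
  by apply: leq_ltn_trans MB; apply: leq_trans (leq_div _ _) (leq_subr _ _).
(* The G-only terms, weighted by K 0 * L 0, cancel by antisymmetry in (a, b). *)
have sum_G_comm : \sum_(0 <= a < p) \sum_(0 <= b < p)
    c a b * block_comm B t m (M' a b) (G b) (G a) = 0.
  apply: sum_antisym => a b; rewrite block_comm_antisym /c /M' [(b + a)%N]addnC.
  by rewrite mulrN.
set S := \sum_(0 <= a < p) _.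
rewrite -(subr0 S) -(mulr0 (K 0%N * L 0%N)) -sum_G_comm {}/S mulr_sumr -sumrB.
apply: in_pZp_sum => a; rewrite mem_index_iota => /andP [_ ap] _.
rewrite mulr_sumr -sumrB; apply: in_pZp_sum => b; rewrite mem_index_iota => /andP [_ bp] _.
rewrite mulrCA -mulrBr; apply: in_pZpMl; first exact: in_pZp_nat.
exact: block_comm_digit_cong ap bp (M'B a b) dK dL.
Qed.

End InductionStep.

Lemma block_comm_cong t B m M K L : (M < B)%N -> dwork_seq K -> dwork_seq L ->
  in_pZp p t.+1 (block_comm B t m M K L).
Proof.
elim: t B m M K L => [|t IHt] B m M K L; first by move=> _; apply: block_comm_base.
exact: block_comm_cong_succ.
Qed.

Lemma block_conv_diag t m M K L :
  block_conv M.+1 t m M K L =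
  \sum_(0 <= x < M.+1) (x %/ p ^ t == m)%N%:R * (A x * A (M - x)%N * (K x * L (M - x)%N)).
Proof.
apply: eq_big_nat => x /andP [_ xM]; rewrite ltnS in xM.
have MxM : (M - x < M.+1)%N by rewrite ltnS leq_subr.
rewrite -(sum_nat_indicator (fun y => (x %/ p ^ t == m)%N%:R * (A x * A y * (K x * L y))) MxM).
by apply: eq_bigr => y _; congr (_%:R * _); apply/eqP/eqP; lia.
Qed.

Lemma ltn_digit v y q : (v < p)%N -> (v + p * y < p * q)%N = (y < q)%N.
Proof. by move=> vp; apply/idP/idP => ?; nia. Qed.

Lemma ps_mul_trunc_diff t v M : (v < p)%N ->
  ps_mul A (subst_pow p (ps_trunc (p ^ t) A)) (v + p * M)%N -
  ps_mul (ps_trunc (p ^ t.+1) A) (subst_pow p A) (v + p * M)%N =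
  block_comm M.+1 t 0 M (G v) (fun _ => 1).
Proof.
move=> vp; have p_gt0 := prime_gt0 p_prime.
have lt_pt x : (x %/ p ^ t == 0)%N = (x < p ^ t)%N.
  by rewrite -leqn0 -ltnS ltn_divLR ?expn_gt0 ?p_gt0 // mul1n.
have digitB j : (j <= M)%N -> (v + p * M - p * j = v + p * (M - j))%N.
  by move=> jM; rewrite mulnBr addnBA // leq_mul2l jM orbT.
rewrite !ps_mul_subst_pow addnC mulnC divnMDl // divn_small // addn0 mulnC addnC.
rewrite /block_comm !block_conv_diag; congr (_ - _).
  apply: eq_big_nat => j /andP [_ jM]; rewrite ltnS in jM.
  rewrite digitB // A_digit // /ps_trunc lt_pt.
  by case: ifP => _; rewrite /= ?mulr0 ?mul0r ?mul1r //; ring.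
rewrite big_nat_rev; apply: eq_big_nat => j /andP [_ jM]; rewrite ltnS in jM.
rewrite add0n subSS digitB ?leq_subr // subKn // /ps_trunc expnS ltn_digit // lt_pt.
by rewrite A_digit //; case: ifP => _; rewrite /= ?mulr0 ?mul0r ?mul1r //; ring.
Qed.

Lemma dwork_quotient_cong s : A 0%N = 1 -> (0 < s)%N ->
  pcong p s (ps_div A (subst_pow p A))
    (ps_div (ps_trunc (p ^ s) A) (subst_pow p (ps_trunc (p ^ s.-1) A))).
Proof.
move=> A0; case: s => // t _ /=; have p_gt0 := prime_gt0 p_prime.
apply: pcong_div.
- by rewrite /subst_pow dvdn0 div0n.
- by rewrite /subst_pow /ps_trunc dvdn0 div0n expn_gt0 p_gt0.
- by move=> i; rewrite /subst_pow; case: ifP => _; [apply: A_int | apply: in_pZp0].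
- move=> i; rewrite /subst_pow /ps_trunc.
  by case: ifP => _; [case: ifP => _; [apply: A_int|] | ]; apply: in_pZp0.
move=> N; rewrite (divn_eq N p) addnC mulnC ps_mul_trunc_diff ?ltn_pmod //.
apply: block_comm_cong => //; first by apply: G_dwork; rewrite ltn_pmod.
exact/dwork_seq_cst/(in_pZp_nat 1).
Qed.

End DworkCongruence.

(** * The coefficients (1/2)_n / n! *)

Section HalfHypergeometric.
Hypothesis p_odd : odd p.

Definition half_coef n : rat := pochhammer (1 / 2) n / (n`!)%:R.

Lemma half_coef0 : half_coef 0 = 1.
Proof. by rewrite /half_coef /pochhammer big_ord0 fact0 divr1. Qed.

Lemma half_coefS n : half_coef n.+1 = half_coef n * (2 * n).+1%:R / (2 * n).+2%:R.
Proof.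
rewrite /half_coef /pochhammer big_ord_recr /= factS natrM.
have -> : (2 * n).+1%:R = 2 * n%:R + 1 :> rat by rewrite -addn1 natrD natrM.
have -> : (2 * n).+2%:R = 2 * (n%:R + 1) :> rat by rewrite -addn2 natrD natrM mulrDr.
have -> : n.+1%:R = n%:R + 1 :> rat by rewrite -addn1 natrD.
have n1_neq0 : n%:R + 1 != 0 :> rat by rewrite natr1 pnatr_eq0.
have fact_neq0 : (n`!)%:R != 0 :> rat by rewrite pnatr_eq0 -lt0n fact_gt0.
by field; rewrite n1_neq0 fact_neq0.
Qed.

Lemma Fser0 k : Fser k 0%N = 1.
Proof. by rewrite /Fser -/(half_coef 0) half_coef0 expr1n. Qed.

Definition unit_factor n : nat := if (p %| n)%N then 1%N else n.

Definition unit_ratio l : rat := (unit_factor (2 * l).+1)%:R / (unit_factor (2 * l).+2)%:R.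

Definition half_unit n : rat := \prod_(0 <= l < n) unit_ratio l.

(* The factor 2l+1 = p(2u+1) of a(b + p u), at l = p u + (p-1)/2, occurs iff 2b+1 > p. *)
Definition digit_factor b u : rat := if (p < (2 * b).+1)%N then p%:R * (2 * u).+1%:R else 1.

Lemma unit_factor_ndvd n : ~~ (p %| unit_factor n)%N.
Proof.
rewrite /unit_factor; case: ifP => [_|/negbT //].
by rewrite dvdn1 neq_ltn prime_gt1 ?orbT.
Qed.

Lemma in_pZp_unit_ratio l : in_pZp p 0 (unit_ratio l).
Proof. by apply: in_pZpMl; [apply: in_pZp_nat | apply/in_pZp_natV/unit_factor_ndvd]. Qed.

Lemma in_pZp_half_unit n : in_pZp p 0 (half_unit n).
Proof. by apply: in_pZp_prod => l; apply: in_pZp_unit_ratio. Qed.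

Lemma unit_factor_shift e n c : (0 < e)%N ->
  in_pZp p e ((unit_factor (n + c * p ^ e))%:R - (unit_factor n)%:R).
Proof.
move=> e_gt0; rewrite /unit_factor dvdn_addl ?dvdn_mull ?dvdn_exp //.
case: ifP => _; first by rewrite subrr; apply: in_pZp0.
by rewrite natrD addrC addKr natrM mulrC; apply: (in_pZp_pexp e c).
Qed.

Lemma prod_window_periodic e P (f : nat -> rat) : (0 < P)%N ->
  (forall l, in_pZp p 0 (f l)) -> (forall l, in_pZp p e (f (l + P)%N - f l)) ->
  forall n, in_pZp p e (\prod_(n <= l < n + P) f l - \prod_(0 <= l < P) f l).
Proof.
move=> P_gt0 f_int f_per; elim => [|n IHn]; first by rewrite add0n subrr; apply: in_pZp0.
have step : \prod_(n.+1 <= l < n.+1 + P) f l - \prod_(n <= l < n + P) f l =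
    \prod_(n.+1 <= l < n + P) f l * (f (n + P)%N - f n).
  rewrite addSn big_nat_recr /=; last by rewrite -addn1 leq_add2l.
  by rewrite [X in _ - X]big_ltn; [ring | rewrite -{1}[n]addn0 ltn_add2l].
apply: in_pZp_trans IHn; rewrite step.
by apply: in_pZpMl => //; apply: in_pZp_prod.
Qed.

Lemma window_unit_cong e n : (0 < e)%N ->
  in_pZp p e (\prod_(n <= l < n + p ^ e) (unit_factor (2 * l).+1)%:R -
              \prod_(n <= l < n + p ^ e) (unit_factor (2 * l).+2)%:R).
Proof.
move=> e_gt0; set P := (p ^ e)%N; have P_gt0 : (0 < P)%N by rewrite expn_gt0 prime_gt0.
pose num l := (unit_factor (2 * l).+1)%:R : rat.
pose den l := (unit_factor (2 * l).+2)%:R : rat.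
have num_int l : in_pZp p 0 (num l) by apply: in_pZp_nat.
have den_int l : in_pZp p 0 (den l) by apply: in_pZp_nat.
have num_per l : in_pZp p e (num (l + P)%N - num l).
  by rewrite /num (_ : (2 * (l + P)).+1 = (2 * l).+1 + 2 * P)%N; [apply: unit_factor_shift | ring].
have den_per l : in_pZp p e (den (l + P)%N - den l).
  by rewrite /den (_ : (2 * (l + P)).+2 = (2 * l).+2 + 2 * P)%N; [apply: unit_factor_shift | ring].
(* den l = num (l + h) mod p^e since 2(l+h)+1 = (2l+2) + p^e: both products run over
   a full period. *)
set h := P.+1./2.
have hP : (2 * h = P.+1)%N by rewrite mul2n -[RHS]odd_double_half /= oddX p_odd orbT.
have den_num : in_pZp p e (\prod_(0 <= l < P) den l - \prod_(h <= l < h + P) num l).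
  rewrite -{1}[h]add0n big_addn addKn; apply: in_pZp_prodB => // j.
  rewrite /num /den (_ : (2 * (j + h)).+1 = (2 * j).+2 + 1 * P)%N; last by lia.
  by rewrite -opprB; apply/in_pZpN/unit_factor_shift.
apply: (in_pZp_trans (prod_window_periodic P_gt0 num_int num_per n)).
apply: (in_pZp_trans (y := \prod_(h <= l < h + P) num l)).
  by rewrite -opprB; apply/in_pZpN/prod_window_periodic.
apply: (in_pZp_trans (y := \prod_(0 <= l < P) den l)).
  by rewrite -opprB; apply/in_pZpN/den_num.
by rewrite -opprB; apply/in_pZpN/prod_window_periodic.
Qed.

Lemma window_unit_ratio e n : (0 < e)%N ->
  in_pZp p e (\prod_(n <= l < n + p ^ e) unit_ratio l - 1).
Proof.
move=> e_gt0; rewrite /unit_ratio big_split /= prodfV.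
set D := \prod_(n <= l < n + p ^ e) (unit_factor (2 * l).+2)%:R.
have D_neq0 : D != 0.
  rewrite prodf_seq_neq0; apply/allP => l _; rewrite pnatr_eq0.
  by apply: contra (unit_factor_ndvd (2 * l).+2) => /eqP ->; apply: dvdn0.
have -> : \prod_(n <= l < n + p ^ e) (unit_factor (2 * l).+1)%:R / D - 1 =
    (\prod_(n <= l < n + p ^ e) (unit_factor (2 * l).+1)%:R - D) * D^-1.
  by field.
apply: in_pZpMr; first exact: window_unit_cong.
by rewrite /D -prodfV; apply: in_pZp_prod => l; apply/in_pZp_natV/unit_factor_ndvd.
Qed.

Lemma half_unit_periodic e n m : (0 < e)%N ->
  in_pZp p e (half_unit (n + m * p ^ e) - half_unit n).
Proof.
move=> e_gt0; elim: m => [|m IHm]; first by rewrite mul0n addn0 subrr; apply: in_pZp0.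
set k := (n + m * p ^ e)%N.
have -> : (n + m.+1 * p ^ e = k + p ^ e)%N by rewrite mulSn addnCA addnC.
rewrite /half_unit (big_cat_nat _ (n := k)) ?leq_addr //= -/(half_unit k).
have -> : half_unit k * \prod_(k <= i < k + p ^ e) unit_ratio i - half_unit n =
  half_unit k * (\prod_(k <= i < k + p ^ e) unit_ratio i - 1) + (half_unit k - half_unit n).
  by ring.
apply: in_pZpD => //; apply: in_pZpMl; first exact: in_pZp_half_unit.
exact: window_unit_ratio.
Qed.

Lemma dvdn_lt_double x : (0 < x < p.*2)%N -> (p %| x)%N = (x == p).
Proof.
case/andP => x_gt0 x_lt; apply/idP/eqP => [/dvdnP [q defx]|->]; last exact: dvdnn.
rewrite defx -mul2n ltn_pmul2r ?prime_gt0 // in x_lt.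
rewrite defx muln_gt0 in x_gt0; case/andP: x_gt0 => q_gt0 _.
by rewrite defx (_ : q = 1%N) ?mul1n //; lia.
Qed.

Lemma half_coef_digit_step b u : (b.+1 < p)%N ->
  half_coef (b + p * u) = half_coef u * (half_unit (b + p * u) * digit_factor b u) ->
  half_coef (b.+1 + p * u) = half_coef u * (half_unit (b.+1 + p * u) * digit_factor b.+1 u).
Proof.
move=> bp IH; set n := (b + p * u)%N; rewrite addSn -/n.
rewrite half_coefS IH /half_unit big_nat_recr //= -/(half_unit n) /unit_ratio.
have two_n1 : ((2 * n).+1 = (2 * b).+1 + p * (2 * u))%N by rewrite /n; ring.
have two_n2 : ((2 * n).+2 = (2 * b).+2 + p * (2 * u))%N by rewrite /n; ring.
have p_neq : (2 * b).+2 != p by apply/eqP => p_even; move: p_odd; rewrite -p_even /= oddM.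
have ndvd_n2 : ~~ (p %| (2 * n).+2)%N.
  by rewrite two_n2 dvdn_addl ?dvdn_mulr // dvdn_lt_double //; apply/andP; split; lia.
rewrite {2}/unit_factor (negbTE ndvd_n2).
have D_neq0 : (2 * n).+2%:R != 0 :> rat by rewrite pnatr_eq0.
move: D_neq0; set D := (2 * n).+2%:R => D_neq0.
have dvd_n1 : (p %| (2 * n).+1)%N = ((2 * b).+1 == p).
  by rewrite two_n1 dvdn_addl ?dvdn_mulr // dvdn_lt_double //; apply/andP; split; lia.
rewrite /unit_factor dvd_n1 /digit_factor.
case: eqP => [b_half|b_half].
  rewrite {1}b_half ltnn (_ : p < (2 * b.+1).+1)%N; last by lia.
  by rewrite two_n1 b_half -mulnS natrM; ring.
rewrite (_ : (p < (2 * b.+1).+1) = (p < (2 * b).+1))%N; first ring.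
by apply/idP/idP => ?; lia.
Qed.

Lemma half_coef_carry_step u :
  half_coef (p.-1 + p * u) = half_coef u * (half_unit (p.-1 + p * u) * digit_factor p.-1 u) ->
  half_coef (p * u.+1) = half_coef u.+1 * half_unit (p * u.+1).
Proof.
move=> IH; have p_gt1 := prime_gt1 p_prime; set n := (p.-1 + p * u)%N.
have -> : (p * u.+1 = n.+1)%N by rewrite /n; lia.
rewrite half_coefS IH half_coefS /half_unit big_nat_recr //= -/(half_unit n) /unit_ratio.
have two_n2 : ((2 * n).+2 = p * (2 * u).+2)%N by rewrite /n; lia.
have ndvd_n1 : ~~ (p %| (2 * n).+1)%N.
  rewrite (_ : (2 * n).+1 = p.-1 + p * (2 * u).+1)%N; last by rewrite /n; lia.
  rewrite dvdn_addl ?dvdn_mulr // dvdn_lt_double; last by apply/andP; split; lia.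
  by rewrite neq_ltn ltn_predL prime_gt0.
rewrite /unit_factor (negbTE ndvd_n1) two_n2 dvdn_mulr // /digit_factor.
rewrite (_ : p < (2 * p.-1).+1)%N; last by lia.
have u2_neq0 : 2 + 2 * u%:R != 0 :> rat by rewrite -natrM -natrD pnatr_eq0.
by rewrite natrM; field; rewrite u2_neq0 pnatr_neq0.
Qed.

Lemma half_coef_digit b u : (b < p)%N ->
  half_coef (b + p * u) = half_coef u * (half_unit (b + p * u) * digit_factor b u).
Proof.
have digit_factor0 v : digit_factor 0 v = 1 by rewrite /digit_factor ltnNge prime_gt0.
have from_digit0 v : half_coef (p * v) = half_coef v * half_unit (p * v) ->
    forall c, (c < p)%N -> half_coef (c + p * v) =
                          half_coef v * (half_unit (c + p * v) * digit_factor c v).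
  move=> v0; elim => [_|c IHc cp]; first by rewrite add0n digit_factor0 mulr1.
  by apply: half_coef_digit_step => //; apply/IHc/ltnW.
elim: u b => [|u IHu]; apply: from_digit0.
  by rewrite muln0 half_coef0 /half_unit big_geq // mul1r.
by apply/half_coef_carry_step/IHu; rewrite prednK ?prime_gt0.
Qed.

Lemma in_pZp_half_coef n : in_pZp p 0 (half_coef n).
Proof.
elim: n {-2}n (leqnn n) => [|n IHn] m.
  by rewrite leqn0 => /eqP ->; rewrite half_coef0; exact: in_pZp_nat 1.
move=> mn; rewrite (divn_eq m p) addnC mulnC half_coef_digit ?ltn_pmod ?prime_gt0 //.
apply: in_pZpMl; last first.
  apply: in_pZpMl; first exact: in_pZp_half_unit.
  rewrite /digit_factor; case: ifP => _; last exact: in_pZp_nat 1.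
  by apply: in_pZpMl; apply: in_pZp_nat.
case: m mn => [|m] mn; first by rewrite div0n half_coef0; apply: (in_pZp_nat 1).
by apply: IHn; rewrite -ltnS (leq_trans _ mn) // ltn_Pdiv ?prime_gt1.
Qed.

Lemma dwork_seq_half_unit b : dwork_seq (fun u => half_unit (b + p * u)%N).
Proof.
split=> [u|u m j]; first exact: in_pZp_half_unit.
by rewrite digit_shift; apply: half_unit_periodic.
Qed.

Lemma dwork_seq_digit_factor b : dwork_seq (digit_factor b).
Proof.
rewrite /digit_factor; case: (p < (2 * b).+1)%N; last exact/dwork_seq_cst/(in_pZp_nat 1).
split => [u|u m j]; first by apply: in_pZpMl; apply: in_pZp_nat.
rewrite -mulrBr -natrB; last by rewrite ltnS leq_mul2l leq_addr orbT.
rewrite (_ : ((2 * (u + m * p ^ j)).+1 - (2 * u).+1 = 2 * m * p ^ j)%N); last by lia.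
rewrite -natrM (_ : p * (2 * m * p ^ j) = p ^ j.+1 * (2 * m))%N; last by rewrite expnS; ring.
by rewrite natrM; apply: (in_pZp_pexp j.+1 (2 * m)).
Qed.

Definition Fser_quot k b u := (half_unit (b + p * u) * digit_factor b u) ^+ k.

Lemma Fser_digit k b u : (b < p)%N -> Fser k (b + p * u)%N = Fser k u * Fser_quot k b u.
Proof. by move=> bp; rewrite /Fser -!/(half_coef _) half_coef_digit // exprMn. Qed.

Lemma in_pZp_Fser k n : in_pZp p 0 (Fser k n).
Proof. exact/in_pZpX/in_pZp_half_coef. Qed.

Lemma dwork_seq_Fser_quot k b : dwork_seq (Fser_quot k b).
Proof. by apply/dwork_seqX/dwork_seqM; [apply: dwork_seq_half_unit | apply: dwork_seq_digit_factor]. Qed.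

End HalfHypergeometric.

End Padic.

Local Close Scope ring_scope.

Theorem mainTheorem3 (k p s : nat) :
  (2 <= k)%N -> prime p -> odd p -> (1 <= s)%N ->
  pcong p s
    (ps_div (Fser k) (subst_pow p (Fser k)))
    (ps_div (ps_trunc (p ^ s) (Fser k)) (subst_pow p (ps_trunc (p ^ s.-1) (Fser k)))).
Proof.
move=> _ p_prime p_odd.
apply: (dwork_quotient_cong p_prime (in_pZp_Fser p_prime p_odd k) _ _ (Fser0 k)).
- by move=> b u; apply: Fser_digit.
- by move=> b _; apply: dwork_seq_Fser_quot.
Qed.
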